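(* The price of anarchy (supremum over all weights $w_1,w_2\ge0$ with $w_1+w_2>0$ and all instances, with respect to subgame-perfect equilibria) for sequential two-player weighted congestion games with affine costs and uniform cost functions is equal to $2$.
   Context: A weighted two-player congestion game with affine costs consists of a finite set $R$ of resources, coefficients $\alpha_r,\beta_r \geq 0$ for each $r\in R$, two players $i=1,2$ with weights $w_i\ge 0$, and for each player $i$ a nonempty finite set $\mathcal{A}_i \subseteq 2^R$ of actions. For an action profile $A=(A_1,A_2)$ the load of $r$ is $x_r(A)=\sum_{j:\, r\in A_j} w_j$. With uniform costs, player $i$ pays $C_i(A)=\sum_{r\in A_i}(\alpha_r+\beta_r x_r(A))$. The social cost is $C(A)=C_1(A)+C_2(A)$. In the sequential game, player 1 chooses $A_1$ first, then player 2, knowing $A_1$, chooses $A_2$. A subgame-perfect equilibrium consists of a function $A_1\mapsto A_2^*(A_1)$ with $C_2(A_1,A_2^*(A_1))\le C_2(A_1,A_2)$ for all $A_1,A_2$, and an action $A_1^*$ with $C_1(A_1^*,A_2^*(A_1^* ))\le C_1(A_1,A_2^*(A_1))$ for all $A_1$; its outcome is $(A_1^*,A_2^*(A_1^* ))$. The price of anarchy of an instance is the maximum over subgame-perfect equilibrium outcomes $A$ of $C(A)/\min_{A'}C(A')$; the price of anarchy of a class is the supremum over all instances (with positive optimal social cost). *)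

From HB Require Import structures.
From mathcomp Require Import all_boot all_order all_algebra.
From mathcomp Require Import reals.
Set Implicit Arguments. Unset Strict Implicit. Unset Printing Implicit Defensive.
Import Order.TTheory GRing.Theory Num.Theory.
Local Open Scope ring_scope.

Section Game.
Variables (F : realType) (T : finType).
Variables (alpha beta : T -> F) (w1 w2 : F).

Definition load (A1 A2 : {set T}) (r : T) : F :=
  (if r \in A1 then w1 else 0) + (if r \in A2 then w2 else 0).

Definition cost1 (A1 A2 : {set T}) : F :=
  \sum_(r in A1) (alpha r + beta r * load A1 A2 r).
Definition cost2 (A1 A2 : {set T}) : F :=
  \sum_(r in A2) (alpha r + beta r * load A1 A2 r).
Definition social (A1 A2 : {set T}) : F := cost1 A1 A2 + cost2 A1 A2.

Definition valid_instance (S1 S2 : {set {set T}}) : Prop :=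
  [/\ forall r, 0 <= alpha r, forall r, 0 <= beta r,
      0 <= w1, 0 <= w2 & 0 < w1 + w2] /\ S1 != set0 /\ S2 != set0.

(* (f, a1) is a subgame-perfect equilibrium of the sequential game
   (player 1 moves first, player 2 responds via the strategy f);
   its outcome is (a1, f a1). *)
Definition is_SPE (S1 S2 : {set {set T}}) (f : {set T} -> {set T})
    (a1 : {set T}) : Prop :=
  [/\ a1 \in S1,
      forall B1, B1 \in S1 -> f B1 \in S2 /\
        (forall B2, B2 \in S2 -> cost2 B1 (f B1) <= cost2 B1 B2)
    & forall B1, B1 \in S1 -> cost1 a1 (f a1) <= cost1 B1 (f B1)].

Definition pos_opt (S1 S2 : {set {set T}}) : Prop :=
  forall B1 B2, B1 \in S1 -> B2 \in S2 -> 0 < social B1 B2.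

End Game.

From Pilot Require Import Defs.
From HB Require Import structures.
From mathcomp Require Import all_boot all_order all_algebra.
From mathcomp Require Import reals.
From mathcomp Require Import lra.
Set Implicit Arguments. Unset Strict Implicit. Unset Printing Implicit Defensive.
Import Order.TTheory GRing.Theory Num.Theory.
Local Open Scope ring_scope.

(** The equilibrium
    yields three inequalities: player 1 prefers a1 to B1 (answered by f B1),
    and player 2 prefers f a1 to B2 against a1 and f B1 to B2 against B1.
    Costs are sums over resources of affine terms, so a nonnegative combination
    of these inequalities, with weights depending on which player is heavier,
    reduces the bound to a resourcewise inequality in alpha, beta, w1 and w2,
    checked by cases on membership. *)

Section Costs.
Variables (F : realType) (T : finType) (alpha beta : T -> F) (w1 w2 : F).
Hypotheses (alpha_ge0 : forall r, 0 <= alpha r) (beta_ge0 : forall r, 0 <= beta r).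
Hypotheses (w1_ge0 : 0 <= w1) (w2_ge0 : 0 <= w2).

Local Notation load := (load w1 w2).
Local Notation cost1 := (cost1 alpha beta w1 w2).
Local Notation cost2 := (cost2 alpha beta w1 w2).
Local Notation social := (social alpha beta w1 w2).

Lemma cost1E A1 A2 :
  cost1 A1 A2 = \sum_r (if r \in A1 then alpha r + beta r * load A1 A2 r else 0).
Proof. by rewrite /cost1 big_mkcond. Qed.

Lemma cost2E A1 A2 :
  cost2 A1 A2 = \sum_r (if r \in A2 then alpha r + beta r * load A1 A2 r else 0).
Proof. by rewrite /cost2 big_mkcond. Qed.

Lemma cost2_le_full_load A1 A2 : cost2 A1 A2 <= cost2 A2 A2.
Proof.
rewrite !cost2E; apply: ler_sum => r _; rewrite /Defs.load.
case: (r \in A2) (r \in A1) => [[]|] //=.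
by rewrite lerD2l ler_wpM2l // lerD2r.
Qed.

Lemma cost2_le_cost1_alone A1 A2 B2 : cost2 A1 B2 <= cost1 A1 A2 + cost2 set0 B2.
Proof.
rewrite !cost1E !cost2E -big_split; apply: ler_sum => r _; rewrite /Defs.load inE.
have := alpha_ge0 r; have := beta_ge0 r.
have := mulr_ge0 (beta_ge0 r) w2_ge0; have := mulr_ge0 (beta_ge0 r) w1_ge0.
case: (r \in A1); case: (r \in A2); case: (r \in B2) => /=; lra.
Qed.

(* The combination used when the leader is the lighter player; the follower's
   deviation to B2 against a1 is first bounded by cost2_le_full_load. *)
Lemma light_leader_deviation_le (B1 g B2 : {set T}) : w1 <= w2 ->
  w2 * (cost1 B1 g + cost2 B2 B2) + (w2 - w1) * cost2 B1 B2 <=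
  2 * w2 * social B1 B2 + (w2 - w1) * cost2 B1 g.
Proof.
move=> w12.
rewrite /social !cost1E !cost2E !mulrDr !mulr_sumr -!big_split /=.
apply: ler_sum => r _; rewrite /Defs.load.
have d_ge0 : 0 <= w2 - w1 by rewrite subr_ge0.
have := alpha_ge0 r; have := beta_ge0 r.
have := mulr_ge0 (alpha_ge0 r) w1_ge0; have := mulr_ge0 (alpha_ge0 r) d_ge0.
have := mulr_ge0 (mulr_ge0 (beta_ge0 r) w1_ge0) w1_ge0.
have := mulr_ge0 (mulr_ge0 (beta_ge0 r) w1_ge0) d_ge0.
have := mulr_ge0 (mulr_ge0 (beta_ge0 r) d_ge0) d_ge0.
case: (r \in B1); case: (r \in g); case: (r \in B2) => /=; lra.
Qed.

(* The combination used when the leader is the heavier player, after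
   cost2_le_cost1_alone. *)
Lemma heavy_leader_deviation_le (B1 g B2 : {set T}) : w2 <= w1 ->
  2 * cost1 B1 g + cost2 set0 B2 + cost2 B1 B2 <=
  2 * social B1 B2 + cost2 B1 g.
Proof.
move=> w21.
rewrite /social !cost1E !cost2E !mulrDr !mulr_sumr -!big_split /=.
apply: ler_sum => r _; rewrite /Defs.load inE.
have d_ge0 : 0 <= w1 - w2 by rewrite subr_ge0.
have := alpha_ge0 r; have := mulr_ge0 (beta_ge0 r) w2_ge0.
have := mulr_ge0 (beta_ge0 r) d_ge0.
case: (r \in B1); case: (r \in g); case: (r \in B2) => /=; lra.
Qed.

Lemma cost1_set1 r s :
  cost1 [set r] [set s] = alpha r + beta r * (w1 + (if r == s then w2 else 0)).
Proof. by rewrite /Defs.cost1 big_set1 /Defs.load !in_set1 eqxx. Qed.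

Lemma cost2_set1 r s :
  cost2 [set r] [set s] = alpha s + beta s * ((if s == r then w1 else 0) + w2).
Proof. by rewrite /Defs.cost2 big_set1 /Defs.load !in_set1 eqxx. Qed.

Lemma SPE_social_le (S1 S2 : {set {set T}}) f a1 :
  0 < w1 + w2 -> is_SPE alpha beta w1 w2 S1 S2 f a1 ->
  forall B1 B2, B1 \in S1 -> B2 \in S2 -> social a1 (f a1) <= 2 * social B1 B2.
Proof.
move=> w_gt0 [a1S best2 best1] B1 B2 B1S B2S.
have [_ /(_ _ B2S) best2_B1] := best2 _ B1S.
have [_ /(_ _ B2S) best2_a1] := best2 _ a1S.
have best1_B1 := best1 _ B1S.
rewrite /Defs.social; case: (leP w1 w2) => [w12 | /ltW w21].
- have w2_gt0 : 0 < w2 by lra.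
  have d_ge0 : 0 <= w2 - w1 by rewrite subr_ge0.
  have dev : cost1 a1 (f a1) + cost2 a1 (f a1) <= cost1 B1 (f B1) + cost2 B2 B2.
    apply: lerD => //; exact: le_trans best2_a1 (cost2_le_full_load a1 B2).
  rewrite -(ler_pM2l w2_gt0).
  have := ler_wpM2l (ltW w2_gt0) dev.
  have := ler_wpM2l d_ge0 best2_B1.
  have := light_leader_deviation_le B1 (f B1) B2 w12.
  rewrite /Defs.social; lra.
- have := cost2_le_cost1_alone a1 (f a1) B2.
  have := heavy_leader_deviation_le B1 (f B1) B2 w21.
  rewrite /Defs.social; lra.
Qed.

End Costs.

(* The follower weighs nothing and is indifferent between x and z, the leader
   is indifferent between x and y; breaking both ties towards x costs 2,
   whereas (y, x) costs 1. *)
Section Tightness.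
Variable F : realType.

Let x : 'I_3 := ord0.
Let y : 'I_3 := Ordinal (isT : (1 < 3)%N).
Let z : 'I_3 := ord_max.

Definition tight_alpha (r : 'I_3) : F := if r == z then 1 else 0.
Definition tight_beta (r : 'I_3) : F := if r == z then 0 else 1.

Local Notation cost1 := (cost1 tight_alpha tight_beta 1 0).
Local Notation cost2 := (cost2 tight_alpha tight_beta 1 0).
Local Notation social := (social tight_alpha tight_beta 1 0).
Local Notation S1 := [set [set x]; [set y]].
Local Notation S2 := [set [set x]; [set z]].

Lemma tight_valid : valid_instance tight_alpha tight_beta 1 0 S1 S2.
Proof.
split; first by split; rewrite ?addr0 // => r;
  rewrite /tight_alpha /tight_beta; case: ifP.
by split; apply/set0Pn; exists [set x]; rewrite !inE eqxx.
Qed.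

Lemma tight_pos_opt : pos_opt tight_alpha tight_beta 1 0 S1 S2.
Proof.
move=> B1 B2 /set2P[->|->] /set2P[->|->];
  rewrite /Defs.social cost1_set1 cost2_set1 /tight_alpha /tight_beta /=; lra.
Qed.

Lemma tight_SPE : is_SPE tight_alpha tight_beta 1 0 S1 S2 (fun=> [set x]) [set x].
Proof.
split; first by rewrite !inE eqxx.
- move=> B1 /set2P[->|->]; split; rewrite ?inE ?eqxx // => B2 /set2P[->|->];
    rewrite !cost2_set1 /tight_alpha /tight_beta /=; lra.
- move=> B1 /set2P[->|->]; rewrite !cost1_set1 /tight_alpha /tight_beta /=; lra.
Qed.

Lemma tight_ratio (eps : F) : 0 < eps ->
  exists B1 B2, [/\ B1 \in S1, B2 \in S2 &
    (2 - eps) * social B1 B2 < social [set x] [set x]].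
Proof.
move=> eps_gt0; exists [set y], [set x]; rewrite !inE !eqxx ?orbT; split => //.
by rewrite /Defs.social !cost1_set1 !cost2_set1 /tight_alpha /tight_beta /=; lra.
Qed.

End Tightness.

Theorem corollary5 (F : realType) :
  (* upper bound: every SPE outcome costs at most 2 * OPT *)
  (forall (T : finType) (alpha beta : T -> F) (w1 w2 : F)
          (S1 S2 : {set {set T}}) (f : {set T} -> {set T}) (a1 : {set T}),
      valid_instance alpha beta w1 w2 S1 S2 ->
      pos_opt alpha beta w1 w2 S1 S2 ->
      is_SPE alpha beta w1 w2 S1 S2 f a1 ->
      forall B1 B2, B1 \in S1 -> B2 \in S2 ->
        social alpha beta w1 w2 a1 (f a1) <= 2 * social alpha beta w1 w2 B1 B2)
  /\
  (* tightness: the ratio 2 is approached arbitrarily closely *)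
  (forall eps : F, 0 < eps ->
    exists (T : finType) (alpha beta : T -> F) (w1 w2 : F)
           (S1 S2 : {set {set T}}) (f : {set T} -> {set T}) (a1 : {set T}),
      [/\ valid_instance alpha beta w1 w2 S1 S2,
          pos_opt alpha beta w1 w2 S1 S2,
          is_SPE alpha beta w1 w2 S1 S2 f a1 &
          exists B1 B2, [/\ B1 \in S1, B2 \in S2 &
            (2 - eps) * social alpha beta w1 w2 B1 B2 <
              social alpha beta w1 w2 a1 (f a1)]]).
Proof.
split.
  move=> T alpha beta w1 w2 S1 S2 f a1 [[alpha_ge0 beta_ge0 w1_ge0 w2_ge0 w_gt0] _] _.
  exact: (SPE_social_le alpha_ge0 beta_ge0 w1_ge0 w2_ge0 w_gt0).
move=> eps eps_gt0; do 9 eexists; split.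
- exact: tight_valid.
- exact: tight_pos_opt.
- exact: tight_SPE.
- exact: tight_ratio.
Qed.
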